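(* Let $C=\{c_1,\dots,c_m\}$ with axis $c_1\lhd\dots\lhd c_m$, and for $1\le i\le j\le m$ let $f(i,j)$ be the probability that, in a vote sampled from the Conitzer distribution for this axis, the candidates $c_i,\dots,c_j$ occupy the top $j-i+1$ positions. Then $f(\ell,\ell)=1/m$ for all $\ell\in[m]$ and $f(1,m)=1$; moreover, for all integers $i,j$ with $1<i\le j<m$: $f(i,j)=1/m$, $f(1,i)=(i+1)/(2m)$, and $f(j,m)=(m-j+2)/(2m)$.
   Context: A vote over $C$ is a total order on $C$ (position 1 is the top). The Conitzer (random peak) distribution for the axis $c_1\lhd\dots\lhd c_m$ generates a vote as follows: pick a candidate uniformly at random and rank it first; then in each of $m-1$ iterations, the already selected candidates form an interval $\{c_a,\dots,c_b\}$ of the axis, and one chooses uniformly at random among the candidates $c_{a-1}$ and $c_{b+1}$ that exist (if only one exists it is chosen with probability 1) and places it in the highest still-available position. *)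

From mathcomp Require Import all_boot all_order all_algebra.
Set Implicit Arguments. Unset Strict Implicit. Unset Printing Implicit Defensive.
Import Order.TTheory GRing.Theory Num.Theory.
Local Open Scope ring_scope.

(* Candidates c_1,...,c_m are represented by the naturals 1,...,m, the axis
   being the natural order 1 < 2 < ... < m.  A vote is a sequence v of
   candidates that is a permutation of [:: 1; ...; m]; v`_0 is the top
   (position 1), v`_k is at position k+1. *)

Definition votes (m : nat) : seq (seq nat) := permutations (iota 1 m).

(* Given the already placed candidates s (a nonempty prefix of the vote),
   the probability that the next placed candidate is x, following the
   Conitzer process: s must form an interval {lo,...,hi} of the axis and x is
   chosen uniformly among the existing neighbours lo-1 (if lo > 1) and
   hi+1 (if hi < m). *)
Definition conitzer_step (R : fieldType) (m : nat) (s : seq nat) (x : nat) : R :=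
  let lo := foldr minn (head 0%N s) s in
  let hi := foldr maxn (head 0%N s) s in
  let is_int := perm_eq s (iota lo (hi - lo).+1) in
  let left := (1 < lo)%N in
  let right := (hi < m)%N in
  let nb := (left + right)%N in
  if is_int && ((left && (x == lo.-1)) || (right && (x == hi.+1)))
  then (nb%:R)^-1 else 0.

Definition conitzer_prob (R : fieldType) (m : nat) (v : seq nat) : R :=
  (m%:R)^-1 * \prod_(1 <= k < m) conitzer_step R m (take k v) (nth 0%N v k).

Definition f (R : fieldType) (m i j : nat) : R :=
  \sum_(v <- votes m | perm_eq (take (j - i).+1 v) (iota i (j - i).+1))
     conitzer_prob R m v.

From mathcomp Require Import all_boot all_order all_algebra zify ring.
Set Implicit Arguments. Unset Strict Implicit. Unset Printing Implicit Defensive.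
Import Order.TTheory GRing.Theory Num.Theory.
Local Open Scope ring_scope.

(* Peel off the last candidate placed among the top ones: since each placed set
   must be an interval, an ordering of {c_i, ..., c_j} has positive weight only
   if it ends with c_i or c_j, and before that the top candidates are
   {c_(i+1), ..., c_j} or {c_i, ..., c_(j-1)}.  Hence, writing m f(i, j) =: H(i, j)
   and d(a, b) for the number of neighbours of {c_a, ..., c_b} on the axis,
   H(i, j) = H(i+1, j) / d(i+1, j) + H(i, j-1) / d(i, j-1), with H(l, l) = 1.
   The completions of the top candidates contribute a factor one, because the
   step probabilities out of an interval sum to one.  The recurrence is then
   solved by H = 1 strictly inside the axis, H(1, i) = (i+1)/2,
   H(j, m) = (m-j+2)/2 and H(1, m) = m. *)

(* For b < a this is the junk value [:: a]. *)
Definition interval (a b : nat) : seq nat := iota a (b - a).+1.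

Lemma interval_uniq a b : uniq (interval a b).
Proof. exact: iota_uniq. Qed.

Lemma mem_interval a b z : (a <= b)%N -> (z \in interval a b) = (a <= z <= b)%N.
Proof. by move=> ab; rewrite mem_iota; apply/idP/idP; lia. Qed.

Lemma interval_cons a b : (0 < a <= b)%N -> interval a.-1 b = a.-1 :: interval a b.
Proof.
move=> ab; rewrite /interval (_ : (b - a.-1).+1 = (b - a).+2); last by lia.
by rewrite /= prednK //; lia.
Qed.

Lemma interval_rcons a b : (a <= b)%N -> interval a b.+1 = rcons (interval a b) b.+1.
Proof.
move=> ab; rewrite /interval -cats1 (_ : (b.+1 - a).+1 = (b - a).+1 + 1)%N; last by lia.
by rewrite iotaD (_ : a + (b - a).+1 = b.+1)%N //; lia.
Qed.

Lemma perm_rcons_interval_left p a b : (1 < a <= b)%N ->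
  perm_eq p (interval a b) -> perm_eq (rcons p a.-1) (interval a.-1 b).
Proof. by move=> ab p_ab; rewrite interval_cons ?perm_rcons ?perm_cons //; lia. Qed.

Lemma perm_rcons_interval_right p a b : (a <= b)%N ->
  perm_eq p (interval a b) -> perm_eq (rcons p b.+1) (interval a b.+1).
Proof. by move=> ab p_ab; rewrite interval_rcons // -!cats1 perm_cat2r. Qed.

Lemma perm_interval_neq0 (p : seq nat) a b : perm_eq p (interval a b) -> p != [::].
Proof. by case: p => // /perm_size. Qed.

Lemma rem_interval_head i j : (i < j)%N -> rem i (interval i j) = interval i.+1 j.
Proof. by move=> ij; rewrite -{2}[i]/(i.+1.-1) interval_cons //= eqxx. Qed.

Lemma rem_interval_last i j : (i < j)%N ->
  perm_eq (rem j (interval i j)) (interval i j.-1).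
Proof.
move=> ij; apply: uniq_perm; rewrite ?rem_uniq ?interval_uniq // => z.
by rewrite (mem_rem_uniq _ (interval_uniq _ _)) inE !mem_interval //; apply/idP/idP; lia.
Qed.

Lemma big_interval_ends (V : nmodType) (G : nat -> V) i j : (i < j)%N ->
  \sum_(y <- interval i j) G y = G i + \sum_(y <- iota i.+1 (j - i.+1)) G y + G j.
Proof.
move=> ij; rewrite /interval (_ : (j - i).+1 = 1 + ((j - i.+1) + 1))%N; last by lia.
rewrite !iotaD !big_cat /= !big_seq1 addrA addn1.
by rewrite (_ : i.+1 + (j - i.+1) = j)%N //; lia.
Qed.

Lemma foldr_minn_le (x0 z : nat) s : z \in x0 :: s -> (foldr minn x0 s <= z)%N.
Proof.
elim: s => [|y s IH]; first by rewrite inE => /eqP ->.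
rewrite /= geq_min !inE => /or3P [zx0 | /eqP -> | zs].
- by rewrite IH ?inE ?zx0 ?orbT.
- by rewrite leqnn.
- by rewrite IH ?inE ?zs ?orbT.
Qed.

Lemma foldr_minn_ge (x0 a : nat) s :
  {in x0 :: s, forall z, a <= z}%N -> (a <= foldr minn x0 s)%N.
Proof.
elim: s => [|y s IH] az /=; first by rewrite az ?mem_head.
rewrite leq_min az ?inE ?eqxx ?orbT //= IH // => z; rewrite inE => /orP [zx0|zs].
  by rewrite az ?inE ?zx0.
by rewrite az // !inE zs !orbT.
Qed.

Lemma foldr_maxn_ge (x0 z : nat) s : z \in x0 :: s -> (z <= foldr maxn x0 s)%N.
Proof.
elim: s => [|y s IH]; first by rewrite inE => /eqP ->.
rewrite /= leq_max !inE => /or3P [zx0 | /eqP -> | zs].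
- by rewrite IH ?inE ?zx0 ?orbT.
- by rewrite leqnn.
- by rewrite IH ?inE ?zs ?orbT.
Qed.

Lemma foldr_maxn_le (x0 b : nat) s :
  {in x0 :: s, forall z, z <= b}%N -> (foldr maxn x0 s <= b)%N.
Proof.
elim: s => [|y s IH] zb /=; first by rewrite zb ?mem_head.
rewrite geq_max zb ?inE ?eqxx ?orbT //= IH // => z; rewrite inE => /orP [zx0|zs].
  by rewrite zb ?inE ?zx0.
by rewrite zb // !inE zs !orbT.
Qed.

Lemma foldr_minn_head (s : seq nat) a :
  a \in s -> {in s, forall z, a <= z}%N -> foldr minn (head 0%N s) s = a.
Proof.
case: s => // y s a_s az; apply/eqP.
rewrite eqn_leq foldr_minn_le ?andTb; last by rewrite in_cons a_s orbT.
apply: foldr_minn_ge => z; rewrite in_cons => /predU1P [->|/az //].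
exact/az/mem_head.
Qed.

Lemma foldr_maxn_head (s : seq nat) b :
  b \in s -> {in s, forall z, z <= b}%N -> foldr maxn (head 0%N s) s = b.
Proof.
case: s => // y s b_s zb; apply/eqP.
rewrite eqn_leq foldr_maxn_ge ?andbT; last by rewrite in_cons b_s orbT.
apply: foldr_maxn_le => z; rewrite in_cons => /predU1P [->|/zb //].
exact/zb/mem_head.
Qed.

Definition num_neighbours (m a b : nat) : nat := (1 < a)%N + (b < m)%N.

Lemma num_neighbours_inner m a b : (1 < a)%N -> (b < m)%N -> num_neighbours m a b = 2.
Proof. by rewrite /num_neighbours => -> ->. Qed.

Lemma num_neighbours_left m b : (b < m)%N -> num_neighbours m 1 b = 1.
Proof. by rewrite /num_neighbours => ->. Qed.

Lemma num_neighbours_right m a : (1 < a)%N -> num_neighbours m a m = 1.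
Proof. by rewrite /num_neighbours ltnn => ->. Qed.

Lemma conitzer_stepE (R : fieldType) m s a b x :
  a \in s -> b \in s -> {in s, forall z, a <= z <= b}%N ->
  conitzer_step R m s x =
  if perm_eq s (interval a b) &&
     (((1 < a)%N && (x == a.-1)) || ((b < m)%N && (x == b.+1)))
  then (num_neighbours m a b)%:R^-1 else 0.
Proof.
move=> a_s b_s sab.
have [az zb] : {in s, forall z, a <= z}%N /\ {in s, forall z, z <= b}%N.
  by split=> z /sab /andP[].
by rewrite /conitzer_step (foldr_minn_head a_s az) (foldr_maxn_head b_s zb).
Qed.

Lemma conitzer_step_interval (R : fieldType) m s a b x :
  (a <= b)%N -> perm_eq s (interval a b) ->
  conitzer_step R m s x =
  if ((1 < a)%N && (x == a.-1)) || ((b < m)%N && (x == b.+1))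
  then (num_neighbours m a b)%:R^-1 else 0.
Proof.
move=> ab s_ab; have mem z : (z \in s) = (a <= z <= b)%N.
  by rewrite (perm_mem s_ab) mem_interval.
by rewrite (@conitzer_stepE _ _ _ a b) ?s_ab ?mem ?leqnn ?ab // => z; rewrite mem.
Qed.

Lemma conitzer_step_gap (R : fieldType) m s i j x y :
  (i < x < j)%N -> perm_eq s (rem x (interval i j)) -> conitzer_step R m s y = 0.
Proof.
move=> ixj s_ij; have mem z : (z \in s) = (z != x) && (i <= z <= j)%N.
  rewrite (perm_mem s_ij) (mem_rem_uniq _ (interval_uniq _ _)) inE.
  by rewrite mem_interval //; lia.
rewrite (@conitzer_stepE _ _ _ i j) ?mem; try lia; last by move=> z; rewrite mem; lia.
suff /negbTE -> : ~~ perm_eq s (interval i j) by [].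
by apply/negP => /perm_mem/(_ x); rewrite mem eqxx mem_interval; lia.
Qed.

Section PermutationSums.
Variables (T : eqType) (V : nmodType).
Implicit Types (s t u r : seq T) (F : seq T -> V).

Lemma perm_big_permutations F s t : perm_eq s t ->
  \sum_(v <- permutations s) F v = \sum_(v <- permutations t) F v.
Proof. by move=> st; apply/perm_big/perm_permutations. Qed.

Lemma big_permutations_cons F s : uniq s -> s != [::] ->
  \sum_(v <- permutations s) F v =
  \sum_(y <- s) \sum_(q <- permutations (rem y s)) F (y :: q).
Proof.
move=> s_uniq; case: s s_uniq => // x s xs_uniq _.
by rewrite (perm_big _ (@permutationsE _ (x :: s) isT)) undup_id // big_allpairs_dep.
Qed.

Lemma big_permutations_rev F s :
  \sum_(v <- permutations s) F v = \sum_(v <- permutations s) F (rev v).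
Proof.
rewrite -(big_map rev predT F); apply/perm_big/uniq_perm.
- exact: permutations_uniq.
- by rewrite (map_inj_uniq (can_inj (@revK T))) permutations_uniq.
move=> v; rewrite -{2}(revK v) (mem_map (can_inj (@revK T))).
by rewrite !mem_permutations perm_rev.
Qed.

Lemma big_permutations_rcons F s : uniq s -> s != [::] ->
  \sum_(v <- permutations s) F v =
  \sum_(y <- s) \sum_(q <- permutations (rem y s)) F (rcons q y).
Proof.
move=> s_uniq s_n0; rewrite big_permutations_rev big_permutations_cons //.
apply: eq_bigr => y _; rewrite [RHS]big_permutations_rev.
by apply: eq_bigr => q _; rewrite rev_cons.
Qed.

Lemma big_permutations_prefix F t u r : uniq (u ++ r) -> perm_eq t (u ++ r) ->
  \sum_(v <- permutations t | perm_eq (take (size u) v) u) F v =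
  \sum_(p <- permutations u) \sum_(q <- permutations r) F (p ++ q).
Proof.
move=> ur_uniq t_ur; rewrite -big_filter -big_allpairs_dep.
apply/perm_big/uniq_perm.
- by rewrite filter_uniq // permutations_uniq.
- rewrite allpairs_uniq_dep ?permutations_uniq //.
  move=> [p1 q1] [p2 q2] /allpairsPdep [p1' [q1' [/[!mem_permutations] p1u _ [-> ->]]]].
  move=> /allpairsPdep [p2' [q2' [/[!mem_permutations] p2u _ [-> ->]]]] /= /eqP.
  by rewrite eqseq_cat ?(perm_size p1u) ?(perm_size p2u) // => /andP [/eqP -> /eqP ->].
move=> v; rewrite mem_filter mem_permutations; apply/andP/allpairsPdep.
- case=> vu tv; exists (take (size u) v), (drop (size u) v).
  rewrite cat_take_drop !mem_permutations vu; split => //.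
  rewrite -(perm_cat2l (take (size u) v)) cat_take_drop.
  by rewrite (perm_trans tv) // (perm_trans t_ur) // perm_cat2r perm_sym.
- case=> p [q [/[!mem_permutations] pu qr ->]].
  rewrite take_size_cat ?(perm_size pu) // pu; split => //.
  by apply: perm_trans (perm_cat pu qr) _; rewrite perm_sym.
Qed.

End PermutationSums.

Section Conitzer.
Variables (R : numFieldType) (m : nat).
Local Notation step := (conitzer_step R m).

Fixpoint tail_weight (p q : seq nat) : R :=
  if q is x :: q' then step p x * tail_weight (rcons p x) q' else 1.

Definition prefix_weight (p : seq nat) : R :=
  if p is y :: r then tail_weight [:: y] r else 1.

Lemma tail_weight_cat p q1 q2 :
  tail_weight p (q1 ++ q2) = tail_weight p q1 * tail_weight (p ++ q1) q2.
Proof.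
elim: q1 p => [|x q1 IH] p /=; first by rewrite mul1r cats0.
by rewrite IH mulrA cat_rcons.
Qed.

Lemma prod_step_tail_weight p q :
  \prod_(size p <= k < size p + size q) step (take k (p ++ q)) (nth 0%N (p ++ q) k)
  = tail_weight p q.
Proof.
elim: q p => [|x q IH] p /=; first by rewrite addn0 big_geq.
rewrite addnS big_ltn ?ltnS ?leq_addr // take_size_cat // nth_cat ltnn subnn /=.
by rewrite -IH size_rcons cat_rcons addSn.
Qed.

Lemma prefix_weight_cat p q : p != [::] ->
  prefix_weight (p ++ q) = prefix_weight p * tail_weight p q.
Proof. by case: p => // y r _; rewrite /= tail_weight_cat. Qed.

Lemma prefix_weight_rcons p x : p != [::] ->
  prefix_weight (rcons p x) = prefix_weight p * step p x.
Proof. by move=> p_n0; rewrite -cats1 prefix_weight_cat //= mulr1. Qed.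

Lemma conitzer_probE v : size v = m ->
  conitzer_prob R m v = (m%:R)^-1 * prefix_weight v.
Proof.
move=> v_m; rewrite /conitzer_prob -[in X in \big[_/_]_(_ <= _ < X) _]v_m.
case: v v_m => [|y r] _; first by rewrite big_geq.
by congr (_ * _); exact: (prod_step_tail_weight [:: y] r).
Qed.

Definition outside (a b : nat) : seq nat := iota 1 a.-1 ++ iota b.+1 (m - b).

Lemma mem_outside a b z : (z \in outside a b) = (0 < z < a)%N || (b < z <= m)%N.
Proof. by rewrite mem_cat !mem_iota; apply/idP/idP; lia. Qed.

Lemma size_outside a b : size (outside a b) = (a.-1 + (m - b))%N.
Proof. by rewrite size_cat !size_iota. Qed.

Lemma outside_uniq a b : (a <= b.+1)%N -> uniq (outside a b).
Proof.
move=> ab; rewrite cat_uniq !iota_uniq andbT /=.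
by apply/hasPn => z; rewrite !mem_iota => zb; apply/negP; lia.
Qed.

Lemma interval_outside_uniq a b : (a <= b)%N -> uniq (interval a b ++ outside a b).
Proof.
move=> ab; rewrite cat_uniq interval_uniq outside_uniq ?andbT /=; last by lia.
by apply/hasPn => z; rewrite mem_outside => zab; rewrite mem_interval //; lia.
Qed.

Lemma perm_iota_interval_outside a b : (0 < a <= b)%N -> (b <= m)%N ->
  perm_eq (iota 1 m) (interval a b ++ outside a b).
Proof.
move=> ab bm; apply: uniq_perm; rewrite ?iota_uniq ?interval_outside_uniq //.
  by lia.
by move=> z; rewrite mem_cat mem_interval ?mem_outside ?mem_iota; lia.
Qed.

Lemma rem_outside_left a b : (1 < a <= b.+1)%N ->
  perm_eq (rem a.-1 (outside a b)) (outside a.-1 b).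
Proof.
move=> ab; have ab_uniq : uniq (outside a b) by apply: outside_uniq; lia.
apply: uniq_perm => [||z]; [exact: rem_uniq | apply: outside_uniq; lia |].
by rewrite (mem_rem_uniq _ ab_uniq) inE !mem_outside; apply/idP/idP; lia.
Qed.

Lemma rem_outside_right a b : (a <= b.+1)%N -> (b < m)%N ->
  perm_eq (rem b.+1 (outside a b)) (outside a b.+1).
Proof.
move=> ab bm; have ab_uniq : uniq (outside a b) by apply: outside_uniq.
apply: uniq_perm => [||z]; [exact: rem_uniq | apply: outside_uniq; lia |].
by rewrite (mem_rem_uniq _ ab_uniq) inE !mem_outside; apply/idP/idP; lia.
Qed.

Lemma count_outside a b : (a <= b)%N ->
  count (fun y => ((1 < a)%N && (y == a.-1)) || ((b < m)%N && (y == b.+1))) (outside a b)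
  = num_neighbours m a b.
Proof.
move=> ab; rewrite count_cat.
rewrite (@eq_in_count _ _ (pred1 a.-1) (iota 1 a.-1)); last first.
  by move=> z; rewrite mem_iota => hz /=; apply/idP/idP; lia.
rewrite (@eq_in_count _ _ (pred1 b.+1) (iota b.+1 (m - b))); last first.
  by move=> z; rewrite mem_iota => hz /=; apply/idP/idP; lia.
rewrite !count_uniq_mem ?iota_uniq // !mem_iota.
by congr (nat_of_bool _ + nat_of_bool _); apply/idP/idP; lia.
Qed.

Lemma sum_conitzer_step_outside p a b : (a <= b)%N -> perm_eq p (interval a b) ->
  (0 < num_neighbours m a b)%N -> \sum_(y <- outside a b) step p y = 1.
Proof.
move=> ab p_ab nb_gt0.
rewrite (eq_bigr _ (fun y _ => conitzer_step_interval R m y ab p_ab)) -big_mkcond /=.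
rewrite big_const_seq iter_addr_0 count_outside // -(mulr_natr (_^-1)) mulVf //.
by rewrite pnatr_eq0 -lt0n.
Qed.

Lemma tail_weight_mass p a b : (0 < a <= b)%N -> (b <= m)%N ->
  perm_eq p (interval a b) -> \sum_(q <- permutations (outside a b)) tail_weight p q = 1.
Proof.
have [n] := ubnP (a.-1 + (m - b))%N; elim: n a b p => // n IH a b p size_lt ab bm p_ab.
have ab' : (a <= b)%N by lia.
have [nb0 | nb_gt0] := posnP (num_neighbours m a b).
  suff -> : outside a b = [::] by rewrite big_seq1.
  by apply/eqP; rewrite -size_eq0 size_outside; move: nb0; rewrite /num_neighbours; lia.
have out_n0 : outside a b != [::].
  by rewrite -size_eq0 size_outside; move: nb_gt0; rewrite /num_neighbours; lia.
rewrite big_permutations_cons ?outside_uniq //; last by lia.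
rewrite -[RHS](sum_conitzer_step_outside ab' p_ab nb_gt0); apply: eq_bigr => y _ /=.
rewrite -mulr_sumr (conitzer_step_interval R m y ab' p_ab).
case: ifP => [|_]; last by rewrite mul0r.
case/orP=> [/andP [a_gt1 /eqP ->] | /andP [b_ltm /eqP ->]].
- rewrite (perm_big_permutations _ (rem_outside_left _)); last by lia.
  by rewrite IH ?mulr1 ?perm_rcons_interval_left //; lia.
- rewrite (perm_big_permutations _ (rem_outside_right _ b_ltm)); last by lia.
  by rewrite IH ?mulr1 ?perm_rcons_interval_right //; lia.
Qed.

Definition prefix_mass (a b : nat) : R :=
  \sum_(p <- permutations (interval a b)) prefix_weight p.

Lemma f_prefix_mass i j : (0 < i <= j)%N -> (j <= m)%N ->
  f R m i j = (m%:R)^-1 * prefix_mass i j.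
Proof.
move=> ij jm; rewrite /f /votes -{1}[(j - i).+1](size_iota i).
rewrite (big_permutations_prefix _ _ (perm_iota_interval_outside ij jm)); last first.
  by apply: interval_outside_uniq; lia.
rewrite /prefix_mass mulr_sumr; apply: eq_big_seq => p /[!mem_permutations] p_ij.
have p_n0 := perm_interval_neq0 p_ij.
transitivity (\sum_(q <- permutations (outside i j))
                (m%:R)^-1 * (prefix_weight p * tail_weight p q)).
  apply: eq_big_seq => q /[!mem_permutations] q_out.
  rewrite conitzer_probE ?prefix_weight_cat // size_cat (perm_size p_ij).
  by rewrite (perm_size q_out) size_iota size_outside; lia.
by rewrite -mulr_sumr -mulr_sumr tail_weight_mass ?mulr1.
Qed.

Lemma prefix_mass_single l : prefix_mass l l = 1.
Proof. by rewrite /prefix_mass /interval subnn /= big_seq1. Qed.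

Lemma prefix_mass_rec i j : (0 < i < j)%N -> (j <= m)%N ->
  prefix_mass i j = prefix_mass i.+1 j / (num_neighbours m i.+1 j)%:R
                    + prefix_mass i j.-1 / (num_neighbours m i j.-1)%:R.
Proof.
move=> ij jm; rewrite {1}/prefix_mass big_permutations_rcons ?interval_uniq //.
rewrite big_interval_ends; last by lia.
rewrite [X in _ + X + _]big1_seq ?addr0; last first.
  move=> y /andP [_]; rewrite mem_iota => y_mid.
  apply: big1_seq => q /andP [_ /[!mem_permutations] q_y].
  rewrite prefix_weight_rcons ?(conitzer_step_gap _ _ _ _ q_y) ?mulr0 //; try lia.
  by rewrite -size_eq0 (perm_size q_y) size_rem ?mem_interval ?size_iota; lia.
congr (_ + _); rewrite /prefix_mass mulr_suml.
- rewrite rem_interval_head; last by lia.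
  apply: eq_big_seq => q /[!mem_permutations] q_ij.
  rewrite prefix_weight_rcons ?(perm_interval_neq0 q_ij) //.
  by rewrite (conitzer_step_interval _ _ _ _ q_ij) ?ifT //; lia.
- rewrite (perm_big_permutations _ (rem_interval_last _)); last by lia.
  apply: eq_big_seq => q /[!mem_permutations] q_ij.
  rewrite prefix_weight_rcons ?(perm_interval_neq0 q_ij) //.
  by rewrite (conitzer_step_interval _ _ _ _ q_ij) ?ifT //; lia.
Qed.

Lemma prefix_mass_inner i j : (1 < i)%N -> (i <= j)%N -> (j < m)%N ->
  prefix_mass i j = 1.
Proof.
have [n] := ubnP (j - i)%N; elim: n i j => // n IH i j ji_lt i_gt1.
rewrite leq_eqVlt => /predU1P [<- _| ij jm]; first exact: prefix_mass_single.
rewrite prefix_mass_rec ?IH ?num_neighbours_inner; try lia.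
by rewrite [RHS]splitr.
Qed.

Lemma prefix_mass_left i : (0 < i < m)%N -> prefix_mass 1 i = i.+1%:R / 2%:R.
Proof.
elim: i => // i IH i_bnd; have [-> | i_gt0] := posnP i.
  by rewrite prefix_mass_single divff // pnatr_eq0.
rewrite prefix_mass_rec /= ?IH ?(@prefix_mass_inner 2 i.+1); try lia.
rewrite (@num_neighbours_inner m 2 i.+1) ?(@num_neighbours_left m i); try lia.
by rewrite divr1 -mulrDl nat1r.
Qed.

Lemma prefix_mass_right j : (1 < j <= m)%N ->
  prefix_mass j m = (m - j + 2)%:R / 2%:R.
Proof.
have [n] := ubnP (m - j)%N; elim: n j => // n IH j mj_lt.
case/andP=> j_gt1; rewrite leq_eqVlt => /predU1P [-> | jm].
  by rewrite prefix_mass_single subnn divff // pnatr_eq0.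
rewrite prefix_mass_rec ?IH ?(@prefix_mass_inner j m.-1); try lia.
rewrite (@num_neighbours_right m j.+1) ?(@num_neighbours_inner m j m.-1); try lia.
rewrite divr1 -mulrDl natr1 (_ : (m - j.+1 + 2).+1 = m - j + 2)%N //; lia.
Qed.

Lemma prefix_mass_full : (0 < m)%N -> prefix_mass 1 m = m%:R.
Proof.
rewrite leq_eqVlt => /predU1P [<- | m_gt1]; first exact: prefix_mass_single.
rewrite prefix_mass_rec ?(@prefix_mass_right 2) ?(@prefix_mass_left m.-1); try lia.
rewrite (@num_neighbours_right m 2) ?(@num_neighbours_left m m.-1); try lia.
rewrite prednK ?subnK; try lia.
by rewrite !divr1 -splitr.
Qed.

End Conitzer.

Theorem proposition1 (R : realFieldType) (m : nat) (hm : (0 < m)%N) :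
  (forall l : nat, (1 <= l <= m)%N -> f R m l l = (m%:R)^-1) /\
  f R m 1 m = 1 /\
  (forall i j : nat, (1 < i)%N -> (i <= j)%N -> (j < m)%N ->
     [/\ f R m i j = (m%:R)^-1,
         f R m 1 i = (i.+1)%:R / (2 * m)%:R &
         f R m j m = (m - j + 2)%:R / (2 * m)%:R]).
Proof.
have m_n0 : (m%:R : R) != 0 by rewrite pnatr_eq0 -lt0n.
split; last split.
- by move=> l l_bnd; rewrite f_prefix_mass ?prefix_mass_single ?mulr1 //; lia.
- by rewrite f_prefix_mass ?prefix_mass_full ?mulVf //; lia.
move=> i j i_gt1 ij jm; rewrite !f_prefix_mass; try lia.
rewrite prefix_mass_inner ?prefix_mass_left ?prefix_mass_right ?mulr1; try lia.
by split; rewrite // natrM mulrC invfM mulrA.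
Qed.
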